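(* A relaxed binary tree $C$ is a compacted binary tree if and only if there are no two distinct vertices $u\neq v$ of $C$ having the same left out-neighbour and the same right out-neighbour. Moreover, if $C$ is not a compacted tree, then such a pair $(u,v)$ exists in which $v$ is a cherry and $u$ precedes $v$ in postorder.
   Context: A (rooted, plane) binary tree is either a leaf or an internal node with an ordered pair (left, right) of binary subtrees; postorder visits left subtree, right subtree, then root. A relaxed binary tree of size $n$ is obtained from a binary tree $T$ with $n$ internal nodes (its spine) by keeping the left-most leaf and turning every other leaf $\ell$ into a pointer to a vertex of $T$ which is an internal node or the left-most leaf and which precedes $\ell$ in postorder. It is regarded as a directed acyclic graph whose vertices are the internal nodes of $T$ and the left-most leaf; each internal node has a left and a right out-edge, going to the corresponding child in $T$ if that child is an internal node or the left-most leaf, and otherwise to the target of the pointer replacing that child (the endpoints of these edges are the left and right out-neighbours, or children, of the node in $C$). For each vertex $u$ define a binary tree $B(u)$: a single leaf if $u$ is the left-most leaf, otherwise the binary tree with left subtree $B(v)$ and right subtree $B(w)$, where $v,w$ are the left and right out-neighbours of $u$. A compacted binary tree is a relaxed binary tree with $B(u)$ not isomorphic to $B(v)$ for all distinct vertices $u\ne v$. An internal node is a cherry if both of its children in the spine $T$ are leaves and neither of them is the left-most leaf. *)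

From mathcomp Require Import all_boot.
Set Implicit Arguments. Unset Strict Implicit. Unset Printing Implicit Defensive.

Inductive btree := BLeaf | BNode of btree & btree.

(* Positions in a tree are paths from the root: false = go left, true = go right. *)
Fixpoint sub (t : btree) (p : seq bool) : option btree :=
  match p, t with
  | [::], _ => Some t
  | false :: p', BNode l _ => sub l p'
  | true :: p', BNode _ r => sub r p'
  | _ :: _, BLeaf => None
  end.

Fixpoint postorder (t : btree) : seq (seq bool) :=
  match t with
  | BLeaf => [:: [::]]
  | BNode l r => [seq false :: p | p <- postorder l] ++
                 [seq true :: p | p <- postorder r] ++ [:: [::]]
  end.

Definition precedes (t : btree) (p q : seq bool) : bool :=
  index p (postorder t) < index q (postorder t).

Definition internal_pos (t : btree) (p : seq bool) : bool :=
  if sub t p is Some (BNode _ _) then true else false.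

Definition leaf_pos (t : btree) (p : seq bool) : bool :=
  if sub t p is Some BLeaf then true else false.

Definition lml_pos (t : btree) (p : seq bool) : bool :=
  leaf_pos t p && all (fun b => b == false) p.

Definition is_vertex (t : btree) (p : seq bool) : bool :=
  internal_pos t p || lml_pos t p.

(* A relaxed binary tree: a spine together with pointers ptr l for every
   leaf l other than the left-most leaf (values of ptr elsewhere are ignored). *)
Record relaxed := Relaxed { spine : btree; ptr : seq bool -> seq bool }.

Definition valid_relaxed (C : relaxed) : Prop :=
  forall l, leaf_pos (spine C) l -> ~~ lml_pos (spine C) l ->
    is_vertex (spine C) (ptr C l) /\ precedes (spine C) (ptr C l) l.

Definition child (C : relaxed) (p : seq bool) (b : bool) : seq bool :=
  let q := rcons p b in
  if is_vertex (spine C) q then q else ptr C q.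

(* B(u), computed by recursion with fuel; out-neighbours strictly precede
   their source in postorder, so fuel = number of positions suffices. *)
Fixpoint Bf (C : relaxed) (k : nat) (p : seq bool) : btree :=
  match k with
  | 0 => BLeaf
  | k'.+1 => if internal_pos (spine C) p
             then BNode (Bf C k' (child C p false)) (Bf C k' (child C p true))
             else BLeaf
  end.

Definition B (C : relaxed) (p : seq bool) : btree :=
  Bf C (size (postorder (spine C))) p.

(* Isomorphism of plane binary trees is equality of btree. *)
Definition compacted (C : relaxed) : Prop :=
  valid_relaxed C /\
  forall u v, is_vertex (spine C) u -> is_vertex (spine C) v -> u <> v ->
    B C u <> B C v.

Definition cherry (t : btree) (p : seq bool) : bool :=
  [&& internal_pos t p,
      leaf_pos t (rcons p false), leaf_pos t (rcons p true),
      ~~ lml_pos t (rcons p false) & ~~ lml_pos t (rcons p true)].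

From Stdlib Require Import Classical.
From mathcomp Require Import all_boot zify.

Set Implicit Arguments.
Unset Strict Implicit.
Unset Printing Implicit Defensive.

(* If B(u) = B(v) for distinct vertices, neither is the left-most leaf, so both
   are internal with pairwise equal B-values of their children; as children
   precede their parents in postorder, descending along children that differ
   ends at two distinct internal nodes with the same out-neighbours.  The
   converse is immediate from the recursive equation of B.
   For such twins u before v, a spine child of v would be the target of the
   pointer replacing the same-side child of u, and a pointer target precedes
   its leaf; in postorder this forces u into the right subtree of v and the
   child to be the left one.  So the right child of v is a pointer leaf, u
   cannot lie below it, and hence both children of v are pointer leaves. *)

Fixpoint postorder_lt (p q : seq bool) : bool :=
  match p, q with
  | [::], _ => false
  | _ :: _, [::] => true
  | a :: p', b :: q' => if a == b then postorder_lt p' q' else ~~ a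
  end.

Lemma postorder_lt_descendant p a s : postorder_lt (p ++ a :: s) p.
Proof. by elim: p => //= b p IH; rewrite eqxx. Qed.

Lemma postorder_lt_rcons u v b : u <> v -> postorder_lt u v ->
  postorder_lt (rcons v b) (rcons u b) -> b = false /\ exists s, u = v ++ true :: s.
Proof.
elim: v u => [|c v IH] [|a u] //=.
- by move=> _ _; case: b; case: a => // _; split; last exists u.
- case: (eqVneq a c) => [->|/negbTE neq_ac] neq_uv; last first.
    by case: a c neq_ac {neq_uv} => [] [].
  move=> lt_uv lt_vu.
  have [-> [s ->]] := IH u (fun e => neq_uv (congr1 _ e)) lt_uv lt_vu.
  by split; last exists s.
Qed.

Lemma sub_cat t p q :
  sub t (p ++ q) = if sub t p is Some t' then sub t' q else None.
Proof. by elim: p t => [|a p IH] [|l r] //=; case: a. Qed.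

Lemma mem_map_cons (T : eqType) (a : T) (s : seq (seq T)) p :
  (p \in [seq a :: q | q <- s]) = if p is b :: q then (b == a) && (q \in s) else false.
Proof.
case: p => [|b p]; first by apply/mapP => -[].
apply/mapP/andP => [[q q_s [-> ->]] | [/eqP -> p_s]]; first by rewrite eqxx.
by exists p.
Qed.

Lemma mem_postorder t p : (p \in postorder t) = isSome (sub t p).
Proof.
elim: t p => [|l IHl r IHr] [|[] p] //=;
  by rewrite ?inE ?mem_cat ?mem_map_cons /= ?inE ?orbF ?IHl ?IHr.
Qed.

Lemma index_postorder_node l r p : p \in postorder (BNode l r) ->
  index p (postorder (BNode l r)) =
  match p with
  | [::] => size (postorder l) + size (postorder r)
  | false :: q => index q (postorder l)
  | true :: q => size (postorder l) + index q (postorder r)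
  end.
Proof.
rewrite mem_postorder /= !index_cat !mem_map_cons !size_map.
have cons_inj (a : bool) : injective (cons a) by move=> x y [].
by case: p => [|[] p] /= p_t; rewrite -?mem_postorder in p_t;
  rewrite ?p_t ?index_map ?addn0.
Qed.

Lemma index_postorder_size t p : p \in postorder t ->
  index p (postorder t) < size (postorder t).
Proof. by rewrite index_mem. Qed.

Lemma precedesE t p q : p \in postorder t -> q \in postorder t ->
  precedes t p q = postorder_lt p q.
Proof.
rewrite /precedes; elim: t p q => [|l IHl r IHr] p q.
  by rewrite !inE => /eqP -> /eqP ->.
move=> p_t q_t; rewrite (index_postorder_node p_t) (index_postorder_node q_t).
move: p_t q_t; rewrite !mem_postorder.
case: p => [|[] p]; case: q => [|[] q] //= p_t q_t; rewrite -?mem_postorder in p_t q_t;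
  rewrite ?ltn_add2l ?IHl ?IHr //;
  try have := index_postorder_size p_t; try have := index_postorder_size q_t;
  move=> *; try apply/negbTE; lia.
Qed.

Lemma precedes_total t p q : p \in postorder t -> q \in postorder t -> p != q ->
  precedes t p q || precedes t q p.
Proof.
rewrite /precedes => p_t q_t; apply: contra_neqT; rewrite negb_or -!leqNgt.
move=> /andP[le_qp le_pq]; apply/eqP.
have /anti_leq same_index :
  index p (postorder t) <= index q (postorder t) <= index p (postorder t).
  by rewrite le_pq.
by rewrite -(nth_index [::] p_t) same_index nth_index.
Qed.

Lemma is_vertex_postorder t p : is_vertex t p -> p \in postorder t.
Proof.
by rewrite /is_vertex /lml_pos /internal_pos /leaf_pos mem_postorder; case: (sub t p).
Qed.

Lemma internal_pos_vertex t p : internal_pos t p -> is_vertex t p.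
Proof. by rewrite /is_vertex => ->. Qed.

Lemma internal_pos_postorder t p : internal_pos t p -> p \in postorder t.
Proof. by move/internal_pos_vertex/is_vertex_postorder. Qed.

Lemma leaf_pos_postorder t p : leaf_pos t p -> p \in postorder t.
Proof. by rewrite /leaf_pos mem_postorder; case: (sub t p). Qed.

Lemma lml_pos_internalF t p : lml_pos t p -> internal_pos t p = false.
Proof. by rewrite /lml_pos /leaf_pos /internal_pos; case: (sub t p) => [[]|]. Qed.

Lemma lml_pos_uniq t p q : lml_pos t p -> lml_pos t q -> p = q.
Proof.
rewrite /lml_pos /leaf_pos.
elim: p t q => [|[] p IH] [|l r] [|[] q] //=; rewrite ?andbF //.
by move=> /andP[p_l p_left] /andP[q_l q_left]; rewrite (IH l q) ?p_l ?q_l.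
Qed.

Lemma rcons_postorder t p b : internal_pos t p -> rcons p b \in postorder t.
Proof.
rewrite /internal_pos mem_postorder -cats1 sub_cat.
by case: (sub t p) => [[|l r]|] //; case: b; case: l; case: r.
Qed.

Lemma precedes_rcons t p b : internal_pos t p -> precedes t (rcons p b) p.
Proof.
move=> p_int.
by rewrite precedesE ?rcons_postorder ?internal_pos_postorder -?cats1
  ?postorder_lt_descendant.
Qed.

Lemma rcons_not_vertex t p b : internal_pos t p -> ~~ is_vertex t (rcons p b) ->
  leaf_pos t (rcons p b) && ~~ lml_pos t (rcons p b).
Proof.
move=> /(rcons_postorder b); rewrite mem_postorder /is_vertex negb_or => pb_t.
move=> /andP[pb_not_int ->]; rewrite andbT.
by move: pb_t pb_not_int; rewrite /internal_pos /leaf_pos; case: (sub t _) => [[]|].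
Qed.

Section RelaxedTree.

Variable C : relaxed.
Hypothesis C_valid : valid_relaxed C.
Local Notation t := (spine C).

Lemma child_is_vertex u b : internal_pos t u -> is_vertex t (child C u b).
Proof.
rewrite /child => u_int; case: ifP => // /negbT /(rcons_not_vertex u_int) /andP[].
by move=> /C_valid /[apply] -[].
Qed.

Lemma child_precedes u b : internal_pos t u -> precedes t (child C u b) u.
Proof.
rewrite /child => u_int; case: ifP => [_|]; first exact: precedes_rcons.
move=> /negbT /(rcons_not_vertex u_int) /andP[] /C_valid /[apply] -[_] ptr_ub.
exact: ltn_trans ptr_ub (precedes_rcons b u_int).
Qed.

Lemma Bf_fuel k1 k2 p : is_vertex t p ->
  index p (postorder t) < k1 -> index p (postorder t) < k2 -> Bf C k1 p = Bf C k2 p.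
Proof.
elim: k1 k2 p => [|k1 IH] [|k2] p //= p_vtx p_k1 p_k2; case: ifP => // p_int.
by congr BNode; apply: IH; rewrite ?child_is_vertex //;
  apply: leq_trans (child_precedes _ p_int) _; rewrite -ltnS.
Qed.

Lemma B_node u : internal_pos t u ->
  B C u = BNode (B C (child C u false)) (B C (child C u true)).
Proof.
move=> u_int; rewrite /B; have := index_postorder_size (internal_pos_postorder u_int).
case: (size _) => [|n] // u_n; rewrite [Bf C n.+1 u]/= u_int.
have child_n b : index (child C u b) (postorder t) < n.
  exact: leq_trans (child_precedes b u_int) u_n.
by congr BNode; apply: Bf_fuel; rewrite ?child_is_vertex //; apply: leqW.
Qed.

Lemma B_lml p : lml_pos t p -> B C p = BLeaf.
Proof.
by rewrite /B => /lml_pos_internalF p_int; case: (size _) => //= n; rewrite p_int.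
Qed.

Lemma B_eq_lml u v : is_vertex t u -> lml_pos t v -> B C u = B C v -> u = v.
Proof.
move=> /orP[u_int | u_lml] v_lml; last by move=> _; apply: lml_pos_uniq u_lml v_lml.
by rewrite B_node // (B_lml v_lml).
Qed.

Definition twins u v :=
  internal_pos t u /\ internal_pos t v /\ u <> v /\
  child C u false = child C v false /\ child C u true = child C v true.

Lemma twins_B_eq u v : twins u v -> B C u = B C v.
Proof.
by move=> [u_int [v_int [_ [eq0 eq1]]]]; rewrite (B_node u_int) (B_node v_int) eq0 eq1.
Qed.

Lemma B_eq_twins n u v :
  index u (postorder t) < n -> index v (postorder t) < n ->
  is_vertex t u -> is_vertex t v -> u <> v -> B C u = B C v ->
  exists u' v', twins u' v'.
Proof.
elim: n u v => // n IH u v u_n v_n u_vtx v_vtx neq_uv eq_B.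
have u_int : internal_pos t u.
  by case/orP: u_vtx => // /(B_eq_lml v_vtx) /(_ (esym eq_B)) /esym /neq_uv.
have v_int : internal_pos t v.
  by case/orP: v_vtx => // /(B_eq_lml u_vtx) /(_ eq_B) /neq_uv.
have twins_below b : child C u b <> child C v b ->
    B C (child C u b) = B C (child C v b) -> exists u' v', twins u' v'.
  apply: IH; rewrite ?child_is_vertex //.
    exact: leq_trans (child_precedes b u_int) u_n.
  exact: leq_trans (child_precedes b v_int) v_n.
move: eq_B; rewrite (B_node u_int) (B_node v_int) => -[eq_B0 eq_B1].
have [eq0|/eqP/twins_below] := eqVneq (child C u false) (child C v false); last by apply.
have [eq1|/eqP/twins_below] := eqVneq (child C u true) (child C v true); last by apply.
by exists u, v.
Qed.

Lemma twins_ordered u v : twins u v ->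
  exists u' v', twins u' v' /\ precedes t u' v'.
Proof.
move=> tw; have [u_int [v_int [neq_uv [eq0 eq1]]]] := tw.
have /orP[prec | prec] := precedes_total (internal_pos_postorder u_int)
  (internal_pos_postorder v_int) (introN eqP neq_uv); first by exists u, v.
by exists v, u; do 4!split=> //; exact: nesym.
Qed.

Lemma twins_spine_child u v b : twins u v -> precedes t u v ->
  is_vertex t (rcons v b) -> b = false /\ exists s, u = v ++ true :: s.
Proof.
move=> [u_int [v_int [neq_uv eq_child]]] prec_uv vb_vtx.
have : child C u b = child C v b by case: b {vb_vtx}; case: eq_child.
rewrite {2}/child vb_vtx /child.
case: ifP => [_ /rcons_inj [] // | /negbT ub_nvtx ptr_ub].
have /andP[ub_leaf ub_nlml] := rcons_not_vertex u_int ub_nvtx.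
have [_] := C_valid ub_leaf ub_nlml; rewrite ptr_ub.
rewrite (precedesE (is_vertex_postorder vb_vtx) (leaf_pos_postorder ub_leaf)).
apply: postorder_lt_rcons neq_uv _.
by rewrite -(precedesE (internal_pos_postorder u_int) (internal_pos_postorder v_int)).
Qed.

Lemma twins_cherry u v : twins u v -> precedes t u v -> cherry t v.
Proof.
move=> tw prec_uv; have [u_int [v_int _]] := tw.
have v1_nvtx : ~~ is_vertex t (rcons v true).
  by apply/negP => /(twins_spine_child tw prec_uv) [].
have /andP[v1_leaf v1_nlml] := rcons_not_vertex v_int v1_nvtx.
have v0_nvtx : ~~ is_vertex t (rcons v false).
  apply/negP => /(twins_spine_child tw prec_uv) [_ [s u_below]].
  move: u_int; rewrite {}u_below -cat_rcons /internal_pos sub_cat.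
  by move: v1_leaf; rewrite /leaf_pos; case: sub => [[]|] //; case: s => [|[]].
have /andP[v0_leaf v0_nlml] := rcons_not_vertex v_int v0_nvtx.
by rewrite /cherry v_int v0_leaf v1_leaf v0_nlml v1_nlml.
Qed.

Lemma compacted_no_twins : compacted C <-> ~ exists u v, twins u v.
Proof.
split=> [[_ B_inj] [u [v tw]] | no_twins].
  have [u_int [v_int [neq_uv _]]] := tw.
  apply: B_inj (internal_pos_vertex u_int) (internal_pos_vertex v_int) neq_uv _.
  exact: twins_B_eq tw.
split=> // u v u_vtx v_vtx neq_uv eq_B; apply: no_twins.
by apply: (B_eq_twins _ _ u_vtx v_vtx neq_uv eq_B);
  apply/index_postorder_size/is_vertex_postorder.
Qed.

End RelaxedTree.

Unset Implicit Arguments.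

Theorem proposition2p8 (C : relaxed) :
  valid_relaxed C ->
  (compacted C <->
     ~ (exists u v, internal_pos (spine C) u /\ internal_pos (spine C) v /\
          u <> v /\ child C u false = child C v false /\
          child C u true = child C v true))
  /\
  (~ compacted C ->
     exists u v, internal_pos (spine C) u /\ internal_pos (spine C) v /\
          u <> v /\ child C u false = child C v false /\
          child C u true = child C v true /\
          cherry (spine C) v /\ precedes (spine C) u v).
Proof.
move=> C_valid; split; first exact: compacted_no_twins.
rewrite compacted_no_twins // => /NNPP [u [v /twins_ordered [u' [v' [tw prec]]]]].
have v'_cherry := twins_cherry C_valid tw prec.
by exists u', v'; have [? [? [? [? ?]]]] := tw.
Qed.
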